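(* Let $H$ be Higman's group, $H=\langle a_i\ (i\in\mathbb Z/4\mathbb Z)\mid a_i a_{i+1} a_i^{-1}=a_{i+1}^2 \text{ for all } i\in \mathbb Z/4\mathbb Z\rangle$, and let $\psi:H\to\mathsf{Homeo}(\mathbb R)$ be a non-trivial homomorphism such that $\psi(H)$ has no global fixed point in $\mathbb R$. Then there is a subgroup $B\le H$ isomorphic to the Baumslag–Solitar group $\mathsf{BS}(1,2)=\langle\alpha,\beta\mid \alpha\beta\alpha^{-1}=\beta^2\rangle$ such that the restriction of $\psi$ to $B$ is injective, $\psi(B)$ preserves a compact interval $I\subset\mathbb R$, and the action of $\psi(B)$ restricted to $I$ is not semi-conjugate to the standard affine action of $\mathsf{BS}(1,2)$.
   Context: The standard affine action of $\mathsf{BS}(1,2)=\langle\alpha,\beta\mid \alpha\beta\alpha^{-1}=\beta^2\rangle$ on $\mathbb R$ is given by $\alpha: x\mapsto 2x$, $\beta:x\mapsto x+1$. Two actions $\psi_1:G\to\mathsf{Homeo}_+(J_1)$, $\psi_2:G\to\mathsf{Homeo}_+(J_2)$ on open intervals (each identified with $\mathbb R$) are semi-conjugate if there is a proper, non-decreasing map $h:J_1\to J_2$ with $h\circ\psi_1(g)=\psi_2(g)\circ h$ for all $g\in G$; for the action of $\psi(B)$ on the compact interval $I$ this refers to its action on the interior of $I$. *)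

From Stdlib Require Import Reals List Bool.
Open Scope R_scope.
Import ListNotations.

(** * Finitely presented groups, as quotients of the free monoid on
    letters (g, inverted?) by the congruence generated by free cancellation
    and the defining relations. *)

Definition word (G : Type) := list (G * bool).  (* (g,false)=g, (g,true)=g^-1 *)

Definition winv {G} (w : word G) : word G :=
  rev (map (fun p => (fst p, negb (snd p))) w).

Inductive peq {G : Type} (rels : word G * word G -> Prop) : word G -> word G -> Prop :=
| peq_refl : forall w, peq rels w w
| peq_sym : forall w1 w2, peq rels w1 w2 -> peq rels w2 w1
| peq_trans : forall w1 w2 w3, peq rels w1 w2 -> peq rels w2 w3 -> peq rels w1 w3
| peq_cancel : forall u v g b,
    peq rels (u ++ (g, b) :: (g, negb b) :: v) (u ++ v)
| peq_rel : forall u v l r, rels (l, r) -> peq rels (u ++ l ++ v) (u ++ r ++ v).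

Inductive gen4 : Type := A0 | A1 | A2 | A3.
Definition next4 (i : gen4) : gen4 :=
  match i with A0 => A1 | A1 => A2 | A2 => A3 | A3 => A0 end.

Definition higman_rel (p : word gen4 * word gen4) : Prop :=
  exists i : gen4,
    p = ([(i, false); (next4 i, false); (i, true)],
         [(next4 i, false); (next4 i, false)]).

Inductive bsgen : Type := Alpha | Beta.

Definition bs_rel (p : word bsgen * word bsgen) : Prop :=
  p = ([(Alpha, false); (Beta, false); (Alpha, true)],
       [(Beta, false); (Beta, false)]).

Definition bs_subst (u v : word gen4) (w : word bsgen) : word gen4 :=
  flat_map (fun p => match p with
                     | (Alpha, false) => u
                     | (Alpha, true) => winv u
                     | (Beta, false) => v
                     | (Beta, true) => winv v
                     end) w.

Definition is_homeo_pair (f g : R -> R) : Prop :=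
  continuity f /\ continuity g /\ (forall x, f (g x) = x) /\ (forall x, g (f x) = x).

(** Action (on the left) of a word, given images of generators and of
    their inverses: the word g1 ... gn acts as g1 o ... o gn. *)
Fixpoint weval {G} (f finv : G -> R -> R) (w : word G) (x : R) : R :=
  match w with
  | [] => x
  | (g, b) :: w' => (if b then finv g else f g) (weval f finv w' x)
  end.

Definition std_f (g : bsgen) (x : R) : R :=
  match g with Alpha => 2 * x | Beta => x + 1 end.
Definition std_finv (g : bsgen) (x : R) : R :=
  match g with Alpha => x / 2 | Beta => x - 1 end.

Definition proper_on (a b : R) (h : R -> R) : Prop :=
  forall K : R -> Prop, compact K -> compact (fun x => a < x < b /\ K (h x)).

Definition semiconj_to_std (a b : R) (act : word bsgen -> R -> R) : Prop :=
  exists h : R -> R,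
    proper_on a b h /\
    (forall x y, a < x -> x <= y -> y < b -> h x <= h y) /\
    (forall w x, a < x < b -> h (act w x) = weval std_f std_finv w (h x)).

From Pilot Require Import Defs.
From Stdlib Require Import Reals ZArith List Lra Lia Classical.
Open Scope R_scope.
Import ListNotations.

(* Every generator a_i acts by an increasing homeomorphism, since a decreasing c cannot be
   conjugate to c^2.  For a = a_i and b = a_(i+1), the relation a b a^-1 = b^2 makes Fix(b)
   a-invariant; if Fix(b) is bounded above, then a b^n = b^(2n) a shows that a pushes points up
   far to the right while it pulls some point just above Fix(b) down, so a has a fixed point
   above Fix(b) and Fix(a) is bounded above.  Going once around the 4-cycle of relations this is
   absurd, so every Fix(a_i) is unbounded above, and by symmetry below.  Without a global fixed
   point some a_j moves a point p fixed by a_(j+1); the a_j-orbit of p converges to common fixed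
   points a < p < b of a_j and a_(j+1).  Hence B = <a_j, a_(j+1)> preserves [a, b], and it is not
   semi-conjugate there to the affine action, in which beta is a translation, because a_(j+1)
   fixes p.  Finally, an action of BS(1,2) by increasing homeomorphisms with both generators
   non-trivial is faithful: if a word in normal form a^-i b^m a^j acts trivially, then b^m acts
   as a power of a, so it commutes with a, hence b^2m = b^m, m = 0 and i = j.  Faithfulness
   gives both injectivity statements. *)

(** * Increasing homeomorphisms of the line *)

Lemma homeo_pair_sym g ginv : is_homeo_pair g ginv -> is_homeo_pair ginv g.
Proof. intros (Hc & Hci & Hl & Hr). repeat split; assumption. Qed.

Lemma homeo_injective g ginv : is_homeo_pair g ginv -> forall x y, g x = g y -> x = y.
Proof.
  intros (_ & _ & _ & Hinv) x y E.
  rewrite <- (Hinv x), <- (Hinv y), E. reflexivity.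
Qed.

Lemma homeo_fixed_inverse g ginv y : is_homeo_pair g ginv -> g y = y -> ginv y = y.
Proof. intros (_ & _ & _ & Hinv) Hy. rewrite <- Hy at 1. apply Hinv. Qed.

Lemma strict_increasing_le g : strict_increasing g -> forall x y, x <= y -> g x <= g y.
Proof. intros Hg x y [Hxy | <-]; [left; apply Hg, Hxy | right; reflexivity]. Qed.

Lemma strict_increasing_inj g : strict_increasing g -> forall x y, g x = g y -> x = y.
Proof.
  intros Hg x y E.
  destruct (Rtotal_order x y) as [H | [H | H]]; [apply Hg in H; lra | exact H | apply Hg in H; lra].
Qed.

Lemma strict_increasing_inverse g ginv :
  strict_increasing g -> (forall x, g (ginv x) = x) -> strict_increasing ginv.
Proof.
  intros Hg Hinv x y Hxy.
  destruct (Rlt_or_le (ginv x) (ginv y)) as [H | H]; [exact H |].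
  apply (strict_increasing_le g Hg) in H. rewrite !Hinv in H. lra.
Qed.

Lemma strict_increasing_iter g n : strict_increasing g -> strict_increasing (Nat.iter n g).
Proof. intro Hg; induction n as [|n IH]; intros x y Hxy; simpl; auto. Qed.

Lemma fixed_of_square_fixed g z : strict_increasing g -> g (g z) = z -> g z = z.
Proof.
  intros Hg E.
  destruct (Rtotal_order z (g z)) as [H | [H | H]]; auto; pose proof (Hg _ _ H); lra.
Qed.

Lemma continuous_injective_monotone g :
  continuity g -> (forall x y, g x = g y -> x = y) ->
  strict_increasing g \/ strict_decreasing g.
Proof.
  intros Hc Hinj.
  destruct (classic (strict_increasing g)) as [Hinc | Hninc]; [left; exact Hinc | right].
  intros x y Hxy. destruct (Rlt_or_le (g y) (g x)) as [H | Hle]; [exact H | exfalso].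
  assert (Hgxy : g x < g y) by (destruct Hle as [H | E]; [exact H | apply Hinj in E; lra]).
  apply Hninc. intros x1 y1 Hxy1.
  destruct (Rlt_or_le (g x1) (g y1)) as [H | Hle1]; [exact H | exfalso].
  assert (Hgxy1 : g y1 < g x1) by (destruct Hle1 as [H | E]; [exact H | apply Hinj in E; lra]).
  (* Along the segment from (x1, y1) to (x, y) the sign of g(upper) - g(lower) flips,
     so two distinct points have the same image. *)
  destruct (IVT (fun t => g ((1 - t) * y1 + t * y) - g ((1 - t) * x1 + t * x)) 0 1)
    as [t [[Ht0 Ht1] Ht]].
  - apply (continuity_minus (comp g (fun t => (1 - t) * y1 + t * y))
                            (comp g (fun t => (1 - t) * x1 + t * x)));
      apply continuity_comp; auto; apply derivable_continuous; reg.
  - lra.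
  - rewrite !Rminus_0_r, !Rmult_1_l, !Rmult_0_l, !Rplus_0_r. lra.
  - replace ((1 - 1) * y1 + 1 * y) with y by ring.
    replace ((1 - 1) * x1 + 1 * x) with x by ring. lra.
  - assert (E : (1 - t) * y1 + t * y = (1 - t) * x1 + t * x) by (apply Hinj; lra).
    assert (0 <= (1 - t) * (y1 - x1)) by (apply Rmult_le_pos; lra).
    destruct Ht0 as [Ht0 | <-]; [|nra].
    assert (0 < t * (y - x)) by (apply Rmult_lt_0_compat; lra). nra.
Qed.

Lemma iter_fixed (g : R -> R) x n : g x = x -> Nat.iter n g x = x.
Proof. intro Hx; induction n as [|n IH]; simpl; [reflexivity | rewrite IH; exact Hx]. Qed.

Lemma iter_cancel (g ginv : R -> R) n x :
  (forall y, g (ginv y) = y) -> Nat.iter n g (Nat.iter n ginv x) = x.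
Proof.
  intro Hinv; induction n as [|n IH]; [reflexivity |].
  rewrite Nat.iter_succ_r, Nat.iter_succ, Hinv. exact IH.
Qed.

Lemma iter_preserves_fixed (g h : R -> R) x :
  (forall y, h y = y -> h (g y) = g y) -> h x = x ->
  forall n, h (Nat.iter n g x) = Nat.iter n g x.
Proof. intros Hgh Hx n; induction n as [|n IH]; simpl; auto. Qed.

Lemma seq_lt_of_succ (u : nat -> R) :
  (forall n, u n < u (S n)) -> forall m n, (m < n)%nat -> u m < u n.
Proof.
  intros Hu m n Hmn; induction Hmn as [|n _ IH]; [apply Hu | apply Rlt_trans with (u n); auto].
Qed.

Lemma orbit_lt g x :
  strict_increasing g -> x < g x -> forall m n, (m < n)%nat -> Nat.iter m g x < Nat.iter n g x.
Proof.
  intros Hg Hx. apply (seq_lt_of_succ (fun k => Nat.iter k g x)).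
  intro k. rewrite Nat.iter_succ_r. apply strict_increasing_iter; assumption.
Qed.

Lemma orbit_gt g x :
  strict_increasing g -> g x < x -> forall m n, (m < n)%nat -> Nat.iter n g x < Nat.iter m g x.
Proof.
  intros Hg Hx m n Hmn.
  enough (- Nat.iter m g x < - Nat.iter n g x) by lra.
  apply (seq_lt_of_succ (fun k => - Nat.iter k g x)); [| exact Hmn].
  intro k. rewrite Nat.iter_succ_r. apply Ropp_lt_contravar, strict_increasing_iter; assumption.
Qed.

Lemma iter_nontrivial g z n : strict_increasing g -> g z <> z -> (0 < n)%nat -> Nat.iter n g z <> z.
Proof.
  intros Hg Hz Hn.
  destruct (Rtotal_order z (g z)) as [H | [H | H]]; [| congruence |].
  - pose proof (orbit_lt g z Hg H 0 n Hn). simpl in *. lra.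
  - pose proof (orbit_gt g z Hg H 0 n Hn). simpl in *. lra.
Qed.

Lemma orbit_le_fixed g x q n : strict_increasing g -> x <= q -> g q = q -> Nat.iter n g x <= q.
Proof.
  intros Hg Hxq Hq. rewrite <- (iter_fixed g q n Hq).
  apply strict_increasing_le; [apply strict_increasing_iter|]; assumption.
Qed.

Lemma orbit_ge_fixed g x q n : strict_increasing g -> q <= x -> g q = q -> q <= Nat.iter n g x.
Proof.
  intros Hg Hxq Hq. rewrite <- (iter_fixed g q n Hq).
  apply strict_increasing_le; [apply strict_increasing_iter|]; assumption.
Qed.

Definition mirror (g : R -> R) (x : R) : R := - g (- x).

Lemma continuity_mirror g : continuity g -> continuity (mirror g).
Proof.
  intro Hg. apply (continuity_opp (comp g Ropp)), continuity_comp; [|exact Hg].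
  apply continuity_opp, derivable_continuous, derivable_id.
Qed.

Lemma strict_increasing_mirror g : strict_increasing g -> strict_increasing (mirror g).
Proof. intros Hg x y Hxy. unfold mirror. apply Ropp_lt_contravar, Hg. lra. Qed.

Lemma homeo_pair_mirror g ginv : is_homeo_pair g ginv -> is_homeo_pair (mirror g) (mirror ginv).
Proof.
  intros (Hc & Hci & Hl & Hr).
  repeat split; try apply continuity_mirror; auto;
    intro x; unfold mirror; rewrite Ropp_involutive; [rewrite Hl | rewrite Hr]; lra.
Qed.

Lemma iter_mirror g n x : Nat.iter n (mirror g) x = - Nat.iter n g (- x).
Proof.
  induction n as [|n IH]; [simpl; lra|].
  rewrite !Nat.iter_succ, IH. unfold mirror. rewrite Ropp_involutive. reflexivity.
Qed.

Lemma continuous_fixes_limit h u L :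
  continuity h -> Un_cv u L -> (forall n, h (u n) = u n) -> h L = L.
Proof.
  intros Hh HL Hu. apply (UL_sequence (fun n => h (u n))).
  - apply continuity_seq; [apply Hh | exact HL].
  - apply (Un_cv_ext u); [intro n; symmetry; apply Hu | exact HL].
Qed.

Lemma orbit_limit_up g x U :
  strict_increasing g -> continuity g -> x < g x -> (forall n, Nat.iter n g x <= U) ->
  exists L, Un_cv (fun n => Nat.iter n g x) L /\ g L = L /\ x < L <= U.
Proof.
  intros Hg Hc Hx HU.
  assert (Hgrow : Un_growing (fun n => Nat.iter n g x))
    by (intro n; left; apply orbit_lt; auto).
  destruct (growing_cv _ Hgrow) as [L HL]; [exists U; intros r [n ->]; apply HU |].
  exists L. split; [exact HL | split; [| split]].
  - apply (UL_sequence (fun n => Nat.iter (S n) g x)).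
    + apply continuity_seq; [apply Hc | exact HL].
    + apply (Un_cv_ext (fun n => Nat.iter (n + 1) g x));
        [intro n; rewrite Nat.add_1_r; reflexivity | apply CV_shift', HL].
  - pose proof (growing_ineq _ _ Hgrow HL 1). simpl in *. lra.
  - apply (Rle_cv_lim HU HL). intros e He. exists O. intros. unfold R_dist.
    rewrite Rminus_diag, Rabs_R0. exact He.
Qed.

Lemma orbit_limit_down g x U :
  strict_increasing g -> continuity g -> g x < x -> (forall n, U <= Nat.iter n g x) ->
  exists L, Un_cv (fun n => Nat.iter n g x) L /\ g L = L /\ U <= L < x.
Proof.
  intros Hg Hc Hx HU.
  destruct (orbit_limit_up (mirror g) (- x) (- U)) as (L & HL & HgL & HxL).
  - apply strict_increasing_mirror, Hg.
  - apply continuity_mirror, Hc.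
  - unfold mirror. rewrite Ropp_involutive. lra.
  - intro n. rewrite iter_mirror, Ropp_involutive. specialize (HU n). lra.
  - exists (- L). split; [| unfold mirror in HgL; split; lra].
    apply (Un_cv_ext (opp_seq (fun n => Nat.iter n (mirror g) (- x)))); [| apply CV_opp, HL].
    intro n. unfold opp_seq. rewrite iter_mirror, !Ropp_involutive. reflexivity.
Qed.

Lemma fixed_point_between g x y :
  continuity g -> x < y -> g x < x -> y < g y -> exists z, x <= z <= y /\ g z = z.
Proof.
  intros Hc Hxy Hx Hy.
  destruct (IVT (fun t => g t - t) x y) as [z [Hz E]]; [| lra | lra | lra | exists z; split; lra].
  apply (continuity_minus g (fun t => t)); [exact Hc | apply derivable_continuous, derivable_id].
Qed.

Lemma common_fixed_points_around_lt g ginv h p :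
  is_homeo_pair g ginv -> strict_increasing g -> continuity h ->
  (forall y, h y = y -> h (g y) = g y /\ h (ginv y) = ginv y) ->
  h p = p -> p < g p ->
  (exists q, p < q /\ g q = q) -> (exists q, q < p /\ g q = q) ->
  exists a b, a < p < b /\ g a = a /\ g b = b /\ h a = a /\ h b = b.
Proof.
  intros Hgg Hg Hh Hinv Hp Hgp [q [Hpq Hq]] [q' [Hqp Hq']].
  pose proof Hgg as (Hgc & Hgic & Hl & Hr).
  assert (Hgi : strict_increasing ginv) by (apply (strict_increasing_inverse g); auto).
  assert (Hgip : ginv p < p) by (rewrite <- (Hr p) at 2; apply Hgi, Hgp).
  assert (Hq'i : ginv q' = q') by (apply (homeo_fixed_inverse g); auto).
  destruct (orbit_limit_up g p q) as (b & Hcvb & Hb & Hpb); auto.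
  { intro n. apply orbit_le_fixed; auto; lra. }
  destruct (orbit_limit_down ginv p q') as (a & Hcva & Ha & Hpa); auto.
  { intro n. apply orbit_ge_fixed; auto; lra. }
  exists a, b. repeat split; try lra.
  - apply (homeo_fixed_inverse ginv g); [apply homeo_pair_sym |]; assumption.
  - apply (continuous_fixes_limit h _ a Hh Hcva).
    apply iter_preserves_fixed; [intros y Hy; apply Hinv, Hy | exact Hp].
  - apply (continuous_fixes_limit h _ b Hh Hcvb).
    apply iter_preserves_fixed; [intros y Hy; apply Hinv, Hy | exact Hp].
Qed.

Lemma common_fixed_points_around g ginv h p :
  is_homeo_pair g ginv -> strict_increasing g -> continuity h ->
  (forall y, h y = y -> h (g y) = g y /\ h (ginv y) = ginv y) ->
  h p = p -> g p <> p ->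
  (exists q, p < q /\ g q = q) -> (exists q, q < p /\ g q = q) ->
  exists a b, a < p < b /\ g a = a /\ g b = b /\ h a = a /\ h b = b.
Proof.
  intros Hgg Hg Hh Hinv Hp Hgp Habove Hbelow.
  destruct (Rtotal_order p (g p)) as [Hlt | [Heq | Hgt]];
    [apply (common_fixed_points_around_lt g ginv); auto | congruence |].
  pose proof Hgg as (_ & _ & Hl & Hr).
  assert (Hfix : forall y, g y = y <-> ginv y = y).
  { intro y. split; [apply (homeo_fixed_inverse g) | apply (homeo_fixed_inverse ginv)];
      auto using homeo_pair_sym. }
  destruct (common_fixed_points_around_lt ginv g h p) as (a & b & Hapb & Ha & Hb & Hha & Hhb).
  - apply homeo_pair_sym, Hgg.
  - apply (strict_increasing_inverse g); auto.
  - exact Hh.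
  - intros y Hy. split; apply Hinv, Hy.
  - exact Hp.
  - rewrite <- (Hr p) at 1. apply (strict_increasing_inverse g); auto.
  - destruct Habove as [q [Hq Hgq]]. exists q. split; [| apply Hfix]; assumption.
  - destruct Hbelow as [q [Hq Hgq]]. exists q. split; [| apply Hfix]; assumption.
  - exists a, b. repeat split; try apply Hfix; assumption || lra.
Qed.

(** * The relation a b a^-1 = b^2 *)

Lemma decreasing_not_conjugate_to_square a ainv c :
  is_homeo_pair a ainv -> strict_decreasing c -> ~ (forall x, a (c (ainv x)) = c (c x)).
Proof.
  intros Ha Hc Hrel. pose proof Ha as (Hac & _ & Hl & _).
  assert (Hcc : c (c 0) < c (c 1)) by (apply Hc, Hc; lra).
  rewrite <- !Hrel in Hcc.
  destruct (continuous_injective_monotone a Hac (homeo_injective a ainv Ha)) as [Hinc | Hdec].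
  - assert (H01 : ainv 0 < ainv 1) by (apply (strict_increasing_inverse a); auto; lra).
    apply Hc, Hinc in H01. lra.
  - assert (H10 : ainv 1 < ainv 0).
    { destruct (Rtotal_order (ainv 1) (ainv 0)) as [H | [H | H]]; [exact H | |];
        [apply (f_equal a) in H | apply Hdec in H]; rewrite !Hl in H; lra. }
    apply Hc, Hdec in H10. lra.
Qed.

Lemma iter_conjugate (a b : R -> R) n y :
  (forall y, a (b y) = b (b (a y))) -> a (Nat.iter n b y) = Nat.iter (2 * n) b (a y).
Proof.
  intro Hab; induction n as [|n IH]; [reflexivity |].
  replace (2 * S n)%nat with (S (S (2 * n))) by lia.
  rewrite !Nat.iter_succ, Hab, IH. reflexivity.
Qed.

Definition above_fixed_points (g : R -> R) (x : R) : Prop := forall y, g y = y -> y < x.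

Lemma above_fixed_points_le g x x' : above_fixed_points g x -> x <= x' -> above_fixed_points g x'.
Proof. intros Hx Hxx' y Hy. specialize (Hx y Hy). lra. Qed.

Lemma above_fixed_points_inverse g ginv x :
  is_homeo_pair g ginv -> above_fixed_points g x -> above_fixed_points ginv x.
Proof.
  intros Hg Hx y Hy. apply Hx, (homeo_fixed_inverse ginv g); [apply homeo_pair_sym |]; assumption.
Qed.

Section BaumslagSolitarPair.

Variables a ainv b binv : R -> R.
Hypothesis Ha : is_homeo_pair a ainv.
Hypothesis Hb : is_homeo_pair b binv.
Hypothesis Ha_incr : strict_increasing a.
Hypothesis Hb_incr : strict_increasing b.
Hypothesis Hab : forall y, a (b y) = b (b (a y)).

Lemma conj_binv y : a (binv y) = binv (binv (a y)).
Proof.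
  pose proof Hb as (_ & _ & Hl & Hr).
  rewrite <- (Hl y) at 2. rewrite Hab, !Hr. reflexivity.
Qed.

Lemma fixed_points_conj_invariant y : b y = y -> b (a y) = a y /\ b (ainv y) = ainv y.
Proof.
  pose proof Ha as (_ & _ & Hl & _).
  intro Hy. split.
  - apply fixed_of_square_fixed; [exact Hb_incr |]. rewrite <- Hab, Hy. reflexivity.
  - apply (strict_increasing_inj a Ha_incr). rewrite Hab, Hl, !Hy. reflexivity.
Qed.

Lemma above_fixed_points_conj x : above_fixed_points b x -> above_fixed_points b (a x).
Proof.
  pose proof Ha as (_ & _ & Hl & _).
  intros Hx y Hy. rewrite <- (Hl y). apply Ha_incr, Hx, fixed_points_conj_invariant, Hy.
Qed.

Lemma above_fixed_points_binv x : above_fixed_points b x -> above_fixed_points b (binv x).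
Proof.
  intros Hx y Hy. rewrite <- (homeo_fixed_inverse b binv y Hb Hy).
  apply (strict_increasing_inverse b); [exact Hb_incr | apply Hb | apply Hx, Hy].
Qed.

Variable x0 : R.
Hypothesis Hx0_above : above_fixed_points b x0.
Hypothesis Hx0_moved : x0 < b x0.

Lemma b_orbit_unbounded z : exists N, z < Nat.iter N b x0.
Proof.
  apply NNPP; intro Hn.
  destruct (orbit_limit_up b x0 z) as (L & _ & HL & HxL); auto.
  - apply Hb.
  - intro N. apply Rnot_lt_le. intro H. apply Hn. exists N. exact H.
  - specialize (Hx0_above L HL). lra.
Qed.

Lemma binv_orbit_below_a : exists K, Nat.iter K binv x0 <= a x0.
Proof.
  pose proof Hb as (_ & Hbic & _ & Hr).
  apply NNPP; intro Hn.
  destruct (orbit_limit_down binv x0 (a x0)) as (L & _ & HL & HaL); auto.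
  - apply (strict_increasing_inverse b); [exact Hb_incr | apply Hb].
  - rewrite <- (Hr x0) at 2.
    apply (strict_increasing_inverse b); [exact Hb_incr | apply Hb | exact Hx0_moved].
  - intro K. apply Rnot_lt_le. intro H. apply Hn. exists K. left. exact H.
  - assert (HbL : b L = L)
      by (apply (homeo_fixed_inverse binv b); [apply homeo_pair_sym, Hb | exact HL]).
    specialize (above_fixed_points_conj x0 Hx0_above L HbL). lra.
Qed.

(* With b^-K x0 <= a x0 and n >= K + 2, a (b^n x0) = b^(2n) (a x0) >= b^(2n-K) x0 lies beyond
   b^(n+1) x0, so a moves all of [b^n x0, b^(n+1) x0] up; these intervals cover a half-line. *)
Lemma a_moves_up_far_right : exists c, x0 < c /\ forall z, c <= z -> z < a z.
Proof.
  pose proof Hb as (_ & _ & Hl & _).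
  destruct binv_orbit_below_a as [K HK].
  assert (Hstep : forall n, (K + 2 <= n)%nat -> Nat.iter (S n) b x0 < a (Nat.iter n b x0)).
  { intros n Hn. rewrite iter_conjugate by exact Hab.
    apply Rlt_le_trans with (Nat.iter (2 * n) b (Nat.iter K binv x0)).
    - replace (2 * n)%nat with (2 * n - K + K)%nat by lia.
      rewrite Nat.iter_add, iter_cancel by exact Hl. apply orbit_lt; auto; lia.
    - apply strict_increasing_le; [apply strict_increasing_iter |]; assumption. }
  assert (Hband : forall N z,
    Nat.iter (K + 2) b x0 <= z -> z < Nat.iter (K + 2 + N) b x0 -> z < a z).
  { induction N as [|N IH]; intros z Hlo Hhi; [rewrite Nat.add_0_r in Hhi; lra |].
    destruct (Rlt_or_le z (Nat.iter (K + 2 + N) b x0)) as [Hz | Hz]; [apply IH; assumption |].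
    rewrite Nat.add_succ_r in Hhi.
    pose proof (Hstep (K + 2 + N)%nat ltac:(lia)).
    pose proof (strict_increasing_le a Ha_incr _ _ Hz). lra. }
  exists (Nat.iter (K + 2) b x0). split; [apply (orbit_lt b x0 Hb_incr Hx0_moved 0); lia |].
  intros z Hz. destruct (b_orbit_unbounded z) as [N HN].
  apply (Hband N z Hz), Rlt_trans with (1 := HN), orbit_lt; auto; lia.
Qed.

Lemma a_moves_down_above_fixed_points : exists w, w < x0 /\ above_fixed_points b w /\ a w < w.
Proof.
  pose proof Hb as (_ & _ & _ & Hr).
  assert (Hbinv : strict_increasing binv) by (apply (strict_increasing_inverse b); auto; apply Hb).
  assert (Hbx0 : binv x0 < x0) by (rewrite <- (Hr x0) at 2; apply Hbinv, Hx0_moved).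
  destruct (b_orbit_unbounded (a x0)) as [K HK].
  exists (Nat.iter (S K) binv x0). split; [| split].
  - apply (orbit_gt binv x0 Hbinv Hbx0 0); lia.
  - clear HK. induction (S K) as [|n IH]; [exact Hx0_above |].
    rewrite Nat.iter_succ. apply above_fixed_points_binv, IH.
  - rewrite iter_conjugate by exact conj_binv.
    apply Rle_lt_trans with (Nat.iter (2 * S K) binv (Nat.iter K b x0)).
    + apply strict_increasing_le; [apply strict_increasing_iter | left]; assumption.
    + replace (2 * S K)%nat with (S (S K) + K)%nat by lia.
      rewrite Nat.iter_add, iter_cancel by exact Hr. apply orbit_gt; auto.
Qed.

Lemma bs_pair_fixed_points :
  (exists z, above_fixed_points b z /\ a z = z) /\ (exists B, above_fixed_points a B).
Proof.
  destruct a_moves_up_far_right as [c [Hc Hup]].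
  destruct a_moves_down_above_fixed_points as [w [Hw [Hwb Hdown]]].
  split.
  - destruct (fixed_point_between a w c) as [z [[Hwz _] Hz]];
      [apply Ha | lra | exact Hdown | apply Hup; lra |].
    exists z. split; [apply above_fixed_points_le with w |]; assumption.
  - exists c. intros z Hz. apply Rnot_le_lt. intro Hcz. specialize (Hup z Hcz). lra.
Qed.

End BaumslagSolitarPair.

(** * Actions of Higman's group *)

Record increasing_higman_action (f finv : gen4 -> R -> R) : Prop := {
  higman_homeo : forall i, is_homeo_pair (f i) (finv i);
  higman_incr : forall i, strict_increasing (f i);
  higman_conj : forall i y, f i (f (next4 i) y) = f (next4 i) (f (next4 i) (f i y)) }.

Lemma next4_surjective i : exists k, next4 k = i.
Proof.
  destruct i; [exists Defs.A3 | exists Defs.A0 | exists Defs.A1 | exists Defs.A2]; reflexivity.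
Qed.

Lemma increasing_higman_action_of_hom f finv :
  (forall i, is_homeo_pair (f i) (finv i)) ->
  (forall l r, higman_rel (l, r) -> forall x, weval f finv l x = weval f finv r x) ->
  increasing_higman_action f finv.
Proof.
  intros Hh Hhom.
  assert (Hrel : forall i x, f i (f (next4 i) (finv i x)) = f (next4 i) (f (next4 i) x))
    by (intros i x; exact (Hhom _ _ (ex_intro _ i eq_refl) x)).
  split; [exact Hh | |].
  - intro i. pose proof (Hh i) as (Hc & _).
    destruct (continuous_injective_monotone (f i) Hc (homeo_injective _ _ (Hh i)))
      as [Hinc | Hdec]; [exact Hinc | exfalso].
    destruct (next4_surjective i) as [k <-].
    exact (decreasing_not_conjugate_to_square (f k) (finv k) _ (Hh k) Hdec (Hrel k)).
  - intros i y. pose proof (Hh i) as (_ & _ & _ & Hr).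
    rewrite <- (Hrel i (f i y)), Hr. reflexivity.
Qed.

Lemma increasing_higman_action_mirror f finv :
  increasing_higman_action f finv ->
  increasing_higman_action (fun i => mirror (f i)) (fun i => mirror (finv i)).
Proof.
  intros [Hh Hinc Hconj]. split.
  - intro i. apply homeo_pair_mirror, Hh.
  - intro i. apply strict_increasing_mirror, Hinc.
  - intros i y. unfold mirror. rewrite !Ropp_involutive, Hconj. reflexivity.
Qed.

Section HigmanFixedPointsUnbounded.

Variables f finv : gen4 -> R -> R.
Hypothesis Hf : increasing_higman_action f finv.

Lemma higman_fixed_points_step i :
  (exists B, above_fixed_points (f (next4 i)) B) ->
  (exists z, above_fixed_points (f (next4 i)) z /\ f i z = z) /\
  (exists B, above_fixed_points (f i) B).
Proof.
  destruct Hf as [Hh Hinc Hconj].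
  intros [B HB]. set (n := next4 i) in *.
  destruct (Rtotal_order B (f n B)) as [Hlt | [Heq | Hgt]].
  - apply (bs_pair_fixed_points (f i) (finv i) (f n) (finv n)) with (x0 := B); auto.
  - specialize (HB B (eq_sym Heq)). lra.
  - pose proof (Hh n) as (_ & _ & _ & Hr).
    assert (Hninv : strict_increasing (finv n))
      by (apply (strict_increasing_inverse (f n)); auto; apply Hh).
    destruct (bs_pair_fixed_points (f i) (finv i) (finv n) (f n)) with (x0 := B)
      as [[z [Hz Hiz]] Hbounded]; auto.
    + apply homeo_pair_sym, Hh.
    + apply (conj_binv (f i) (f n) (finv n)); auto.
    + apply (above_fixed_points_inverse (f n)); auto.
    + rewrite <- (Hr B) at 1. apply Hninv, Hgt.
    + split; [exists z; split |]; auto.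
      apply (above_fixed_points_inverse (finv n)); [apply homeo_pair_sym |]; auto.
Qed.

(* Bounded fixed-point sets propagate backwards around the 4-cycle, and then the points
   z_i produced by the step lemma would satisfy z_0 > z_1 > z_2 > z_3 > z_0. *)
Lemma higman_fixed_points_unbounded_above i B : exists x, B < x /\ f i x = x.
Proof.
  apply NNPP; intro Hn.
  assert (Hi : exists B', above_fixed_points (f i) B').
  { exists (B + 1). intros y Hy. apply Rnot_le_lt. intro H.
    apply Hn. exists y. split; [lra | exact Hy]. }
  assert (Hall : forall k, exists B', above_fixed_points (f k) B').
  { intro k. destruct i, k; repeat (assumption || apply higman_fixed_points_step). }
  assert (Hz : forall k, exists z, above_fixed_points (f (next4 k)) z /\ f k z = z)
    by (intro k; apply higman_fixed_points_step, Hall).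
  destruct (Hz Defs.A0) as [z0 [H0 E0]], (Hz Defs.A1) as [z1 [H1 E1]],
           (Hz Defs.A2) as [z2 [H2 E2]], (Hz Defs.A3) as [z3 [H3 E3]].
  specialize (H0 _ E1). specialize (H1 _ E2). specialize (H2 _ E3). specialize (H3 _ E0). lra.
Qed.

End HigmanFixedPointsUnbounded.

Lemma higman_fixed_points_unbounded_below f finv i B :
  increasing_higman_action f finv -> exists x, x < B /\ f i x = x.
Proof.
  intro Hf.
  destruct (higman_fixed_points_unbounded_above _ _ (increasing_higman_action_mirror f finv Hf)
              i (- B)) as [x [Hx Hfx]].
  exists (- x). unfold mirror in Hfx. split; lra.
Qed.

Section HigmanNestedFixedPoints.

Variables f finv : gen4 -> R -> R.
Hypothesis Hf : increasing_higman_action f finv.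

Lemma higman_trivial_next k : (forall z, f k z = z) -> forall z, f (next4 k) z = z.
Proof.
  intros Hk z. apply (strict_increasing_inj (f (next4 k)) (higman_incr _ _ Hf _)).
  pose proof (higman_conj _ _ Hf k z) as E. rewrite !Hk in E. symmetry. exact E.
Qed.

(* Either some a_j moves a fixed point p of a_(j+1), and the a_j-orbit of p converges on
   both sides to common fixed points, or all a_j have the same fixed points. *)
Lemma higman_nested_fixed_points :
  (~ exists x, forall i, f i x = x) ->
  exists j a p b, a < p < b /\ f j a = a /\ f j b = b /\
    f (next4 j) a = a /\ f (next4 j) b = b /\ f (next4 j) p = p.
Proof.
  pose proof Hf as [Hh Hinc Hconj].
  intro Hnofix.
  destruct (classic (exists j p, f (next4 j) p = p /\ f j p <> p)) as [[j [p [Hp Hjp]]] | Hnested].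
  - destruct (common_fixed_points_around (f j) (finv j) (f (next4 j)) p)
      as (a & b & Hapb & Ha & Hb & Hna & Hnb); auto.
    + apply Hh.
    + apply (fixed_points_conj_invariant _ _ _ (Hh j)); auto.
    + destruct (higman_fixed_points_unbounded_above f finv Hf j p) as [q [Hq Hjq]]. eauto.
    + destruct (higman_fixed_points_unbounded_below f finv j p Hf) as [q [Hq Hjq]]. eauto.
    + exists j, a, p, b. repeat split; tauto.
  - exfalso. apply Hnofix.
    assert (Hdown : forall j p, f (next4 j) p = p -> f j p = p)
      by (intros j p Hp; apply NNPP; intro Hjp; apply Hnested; eauto).
    destruct (higman_fixed_points_unbounded_above f finv Hf Defs.A0 0) as [x [_ Hx]].
    pose proof (Hdown Defs.A3 x Hx) as H3. pose proof (Hdown Defs.A2 x H3) as H2.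
    pose proof (Hdown Defs.A1 x H2) as H1. exists x. intro i; destruct i; assumption.
Qed.

End HigmanNestedFixedPoints.

(** * Presentations and the normal form of BS(1,2) *)

Section Presentations.

Context {G : Type} (rels : word G * word G -> Prop).

Lemma peq_app_l (u x y : word G) : peq rels x y -> peq rels (u ++ x) (u ++ y).
Proof.
  induction 1.
  - apply peq_refl.
  - apply peq_sym; assumption.
  - eapply peq_trans; eassumption.
  - rewrite !app_assoc. apply peq_cancel.
  - rewrite (app_assoc u u0 (l ++ v)), (app_assoc u u0 (r ++ v)). apply peq_rel; assumption.
Qed.

Lemma peq_app_r (v x y : word G) : peq rels x y -> peq rels (x ++ v) (y ++ v).
Proof.
  induction 1.
  - apply peq_refl.
  - apply peq_sym; assumption.
  - eapply peq_trans; eassumption.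
  - rewrite <- !app_assoc. apply peq_cancel.
  - rewrite <- !app_assoc. apply peq_rel; assumption.
Qed.

Lemma peq_cancel_head g b (v : word G) : peq rels ((g, b) :: (g, negb b) :: v) v.
Proof. apply (peq_cancel rels [] v g b). Qed.

Lemma winv_app (x y : word G) : winv (x ++ y) = winv y ++ winv x.
Proof. unfold winv. rewrite map_app, rev_app_distr. reflexivity. Qed.

Lemma winv_involutive (x : word G) : winv (winv x) = x.
Proof.
  unfold winv. rewrite map_rev, rev_involutive, map_map.
  induction x as [|[g b] x IH]; simpl; [reflexivity |].
  rewrite Bool.negb_involutive. f_equal. exact IH.
Qed.

Lemma peq_mul_winv (w : word G) : peq rels (w ++ winv w) [].
Proof.
  induction w as [|[g b] w IH]; [apply peq_refl |].
  change ((g, b) :: w) with ([(g, b)] ++ w). rewrite winv_app, <- app_assoc.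
  eapply peq_trans; [apply peq_app_l; rewrite app_assoc; apply peq_app_r, IH |].
  apply peq_cancel_head.
Qed.

Lemma peq_winv_mul (w : word G) : peq rels (winv w ++ w) [].
Proof. rewrite <- (winv_involutive w) at 2. apply peq_mul_winv. Qed.

Lemma peq_of_mul_winv (x y : word G) : peq rels (x ++ winv y) [] -> peq rels x y.
Proof.
  intro H. apply peq_trans with (x ++ winv y ++ y).
  - rewrite <- (app_nil_r x) at 1. apply peq_app_l, peq_sym, peq_winv_mul.
  - rewrite app_assoc. apply (peq_app_r y _ [] H).
Qed.

Lemma weval_app (f finv : G -> R -> R) (x y : word G) z :
  weval f finv (x ++ y) z = weval f finv x (weval f finv y z).
Proof. induction x as [|[g b] x IH]; simpl; [reflexivity | rewrite IH; reflexivity]. Qed.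

Lemma weval_peq (f finv : G -> R -> R) :
  (forall g z, f g (finv g z) = z) -> (forall g z, finv g (f g z) = z) ->
  (forall l r, rels (l, r) -> forall z, weval f finv l z = weval f finv r z) ->
  forall w1 w2, peq rels w1 w2 -> forall z, weval f finv w1 z = weval f finv w2 z.
Proof.
  intros Hl Hr Hrels w1 w2 H. induction H; intro z.
  - reflexivity.
  - symmetry; auto.
  - rewrite IHpeq1; auto.
  - rewrite !weval_app. destruct b; simpl; rewrite ?Hl, ?Hr; reflexivity.
  - rewrite !weval_app, (Hrels l r H). reflexivity.
Qed.

Lemma weval_fixed (f finv : G -> R -> R) x :
  (forall g, finv g (f g x) = x) -> (forall g, f g x = x) -> forall w, weval f finv w x = x.
Proof.
  intros Hr Hx w. induction w as [|[g b] w IH]; simpl; [reflexivity |].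
  rewrite IH. destruct b; [rewrite <- (Hx g) at 1; apply Hr | apply Hx].
Qed.

Lemma weval_repeat (f finv : G -> R -> R) g b k z :
  weval f finv (repeat (g, b) k) z = Nat.iter k (if b then finv g else f g) z.
Proof. induction k as [|k IH]; simpl; [reflexivity | rewrite IH; reflexivity]. Qed.

End Presentations.

Definition zpow {G : Type} (g : G) (m : Z) : word G :=
  if (0 <=? m)%Z then repeat (g, false) (Z.to_nat m) else repeat (g, true) (Z.to_nat (- m)).

Section IntegerPowers.

Context {G : Type} (rels : word G * word G -> Prop).

Lemma zpow_nonneg (g : G) m : (0 <= m)%Z -> zpow g m = repeat (g, false) (Z.to_nat m).
Proof. intro H. unfold zpow. destruct (Z.leb_spec 0 m); [reflexivity | lia]. Qed.

Lemma zpow_nonpos (g : G) m : (m <= 0)%Z -> zpow g m = repeat (g, true) (Z.to_nat (- m)).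
Proof.
  intro H. unfold zpow. destruct (Z.leb_spec 0 m); [| reflexivity].
  replace m with 0%Z by lia. reflexivity.
Qed.

Lemma zpow_of_nat (g : G) k : zpow g (Z.of_nat k) = repeat (g, false) k.
Proof. rewrite zpow_nonneg by lia. f_equal. lia. Qed.

Lemma zpow_opp_of_nat (g : G) k : zpow g (- Z.of_nat k) = repeat (g, true) k.
Proof. rewrite zpow_nonpos by lia. f_equal. lia. Qed.

Lemma zpow_succ (g : G) m : peq rels ((g, false) :: zpow g m) (zpow g (m + 1)).
Proof.
  destruct (Z.le_gt_cases 0 m).
  - rewrite !zpow_nonneg by lia. replace (Z.to_nat (m + 1)) with (S (Z.to_nat m)) by lia.
    apply peq_refl.
  - rewrite !zpow_nonpos by lia. replace (Z.to_nat (- m)) with (S (Z.to_nat (- (m + 1)))) by lia.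
    apply (peq_cancel_head rels g false).
Qed.

Lemma zpow_pred (g : G) m : peq rels ((g, true) :: zpow g m) (zpow g (m - 1)).
Proof.
  destruct (Z.le_gt_cases m 0).
  - rewrite !zpow_nonpos by lia. replace (Z.to_nat (- (m - 1))) with (S (Z.to_nat (- m))) by lia.
    apply peq_refl.
  - rewrite !zpow_nonneg by lia. replace (Z.to_nat m) with (S (Z.to_nat (m - 1))) by lia.
    apply (peq_cancel_head rels g true).
Qed.

Lemma repeat_app_zpow (g : G) b k n :
  peq rels (repeat (g, b) k ++ zpow g n)
    (zpow g ((if b then - Z.of_nat k else Z.of_nat k) + n)).
Proof.
  revert n. induction k as [|k IH]; intro n; [destruct b; apply peq_refl |].
  eapply peq_trans; [apply (peq_app_l rels [(g, b)]), IH |].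
  destruct b; eapply peq_trans; [apply zpow_pred | | apply zpow_succ |].
  - replace (- Z.of_nat k + n - 1)%Z with (- Z.of_nat (S k) + n)%Z by lia. apply peq_refl.
  - replace (Z.of_nat k + n + 1)%Z with (Z.of_nat (S k) + n)%Z by lia. apply peq_refl.
Qed.

Lemma zpow_add (g : G) m n : peq rels (zpow g m ++ zpow g n) (zpow g (m + n)).
Proof.
  destruct (Z.le_gt_cases 0 m).
  - rewrite (zpow_nonneg g m) by lia. eapply peq_trans; [apply (repeat_app_zpow g false) |].
    replace (Z.of_nat (Z.to_nat m) + n)%Z with (m + n)%Z by lia. apply peq_refl.
  - rewrite (zpow_nonpos g m) by lia. eapply peq_trans; [apply (repeat_app_zpow g true) |].
    replace (- Z.of_nat (Z.to_nat (- m)) + n)%Z with (m + n)%Z by lia. apply peq_refl.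
Qed.

Lemma weval_zpow_trivial (f finv : G -> R -> R) g m :
  is_homeo_pair (f g) (finv g) -> strict_increasing (f g) -> (exists z, f g z <> z) ->
  (forall z, weval f finv (zpow g m) z = z) -> m = 0%Z.
Proof.
  intros Hh Hinc [z Hz] Htriv. specialize (Htriv z).
  destruct (Z.lt_trichotomy m 0) as [Hm | [Hm | Hm]]; [exfalso | exact Hm | exfalso].
  - rewrite zpow_nonpos, weval_repeat in Htriv by lia.
    refine (iter_nontrivial (finv g) z _ _ _ _ Htriv); [| | lia].
    + apply (strict_increasing_inverse (f g)); [exact Hinc | apply Hh].
    + intro E. apply Hz, (homeo_fixed_inverse (finv g)); [apply homeo_pair_sym |]; assumption.
  - rewrite zpow_nonneg, weval_repeat in Htriv by lia.
    refine (iter_nontrivial (f g) z _ Hinc Hz _ Htriv). lia.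
Qed.

End IntegerPowers.

Notation bs_eq := (peq bs_rel).

Section BaumslagSolitarNormalForm.

Local Notation la := (Alpha, false).
Local Notation lA := (Alpha, true).
Local Notation lb := (Beta, false).
Local Notation lB := (Beta, true).

Lemma bs_alpha_beta : bs_eq [la; lb] [lb; lb; la].
Proof.
  apply peq_trans with [la; lb; lA; la].
  - apply peq_sym, (peq_cancel bs_rel [la; lb] [] Alpha true).
  - apply (peq_rel bs_rel [] [la] [la; lb; lA] [lb; lb]). reflexivity.
Qed.

Lemma bs_alpha_beta_inv : bs_eq [la; lB] [lB; lB; la].
Proof.
  apply peq_sym, peq_trans with [lB; lB; la; lb; lB].
  { apply peq_sym, (peq_cancel bs_rel [lB; lB; la] [] Beta false). }
  apply peq_trans with ([lB; lB] ++ [lb; lb; la] ++ [lB]).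
  { apply (peq_app_l bs_rel [lB; lB] ([la; lb] ++ [lB])), peq_app_r, bs_alpha_beta. }
  apply peq_trans with [lB; lb; la; lB].
  - apply (peq_cancel bs_rel [lB] [lb; la; lB] Beta true).
  - apply (peq_cancel_head bs_rel Beta true).
Qed.

Lemma bs_alpha_repeat x k :
  bs_eq [la; x] [x; x; la] -> bs_eq (la :: repeat x k) (repeat x (2 * k) ++ [la]).
Proof.
  intro Hx. induction k as [|k IH]; [apply peq_refl |].
  apply peq_trans with ([x; x; la] ++ repeat x k);
    [apply (peq_app_r bs_rel (repeat x k) [la; x]), Hx |].
  replace (2 * S k)%nat with (S (S (2 * k))) by lia.
  apply (peq_app_l bs_rel [x; x]), IH.
Qed.

Lemma bs_alpha_zpow m : bs_eq (la :: zpow Beta m) (zpow Beta (2 * m) ++ [la]).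
Proof.
  destruct (Z.le_gt_cases 0 m).
  - rewrite !zpow_nonneg by lia. replace (Z.to_nat (2 * m)) with (2 * Z.to_nat m)%nat by lia.
    apply bs_alpha_repeat, bs_alpha_beta.
  - rewrite !zpow_nonpos by lia.
    replace (Z.to_nat (- (2 * m))) with (2 * Z.to_nat (- m))%nat by lia.
    apply bs_alpha_repeat, bs_alpha_beta_inv.
Qed.

Lemma bs_zpow_alpha_inv m : bs_eq (zpow Beta m ++ [lA]) (lA :: zpow Beta (2 * m)).
Proof.
  apply peq_trans with ([lA] ++ (la :: zpow Beta m) ++ [lA]).
  { apply peq_sym, (peq_cancel_head bs_rel Alpha true). }
  apply peq_trans with ([lA] ++ (zpow Beta (2 * m) ++ [la]) ++ [lA]).
  { apply peq_app_l, peq_app_r, bs_alpha_zpow. }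
  rewrite <- app_assoc. rewrite <- (app_nil_r (zpow Beta (2 * m))) at 2.
  apply (peq_app_l bs_rel [lA]), (peq_cancel bs_rel _ [] Alpha false).
Qed.

Lemma bs_zpow_alpha_inv_repeat i m :
  bs_eq (zpow Beta m ++ repeat lA i) (repeat lA i ++ zpow Beta (m * 2 ^ Z.of_nat i)).
Proof.
  revert m. induction i as [|i IH]; intro m.
  - rewrite app_nil_r, Z.mul_1_r. apply peq_refl.
  - change (repeat lA (S i)) with ([lA] ++ repeat lA i). rewrite app_assoc.
    eapply peq_trans; [apply peq_app_r, bs_zpow_alpha_inv |].
    apply (peq_app_l bs_rel [lA]). eapply peq_trans; [apply IH |].
    rewrite Nat2Z.inj_succ, Z.pow_succ_r, Z.mul_assoc, (Z.mul_comm m 2) by lia. apply peq_refl.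
Qed.

Definition bs_normal_form (i : nat) (m : Z) (j : nat) : word bsgen :=
  repeat lA i ++ zpow Beta m ++ repeat la j.

Lemma bs_zpow_normal_form c i m j :
  bs_eq (zpow Beta c ++ bs_normal_form i m j) (bs_normal_form i (c * 2 ^ Z.of_nat i + m) j).
Proof.
  unfold bs_normal_form. rewrite app_assoc.
  eapply peq_trans; [apply peq_app_r, bs_zpow_alpha_inv_repeat |].
  rewrite <- !app_assoc. apply peq_app_l. rewrite app_assoc. apply peq_app_r, zpow_add.
Qed.

Lemma bs_normal_form_exists w : exists i m j, bs_eq w (bs_normal_form i m j).
Proof.
  induction w as [|[g b] w [i [m [j IH]]]]; [exists O, 0%Z, O; apply peq_refl |].
  assert (Hcons : bs_eq ((g, b) :: w) ((g, b) :: bs_normal_form i m j))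
    by apply (peq_app_l bs_rel [(g, b)]), IH.
  destruct g, b.
  - exists (S i), m, j. exact Hcons.
  - destruct i as [|i].
    + exists O, (2 * m)%Z, (S j). eapply peq_trans; [exact Hcons |].
      unfold bs_normal_form. cbn [repeat app].
      replace (zpow Beta (2 * m) ++ la :: repeat la j)
        with ((zpow Beta (2 * m) ++ [la]) ++ repeat la j) by (rewrite <- app_assoc; reflexivity).
      apply (peq_app_r bs_rel (repeat la j) (la :: zpow Beta m)), bs_alpha_zpow.
    + exists i, m, j. eapply peq_trans; [exact Hcons | apply (peq_cancel_head bs_rel Alpha false)].
  - exists i, (-1 * 2 ^ Z.of_nat i + m)%Z, j.
    eapply peq_trans; [exact Hcons | apply (bs_zpow_normal_form (-1))].
  - exists i, (1 * 2 ^ Z.of_nat i + m)%Z, j.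
    eapply peq_trans; [exact Hcons | apply (bs_zpow_normal_form 1)].
Qed.

End BaumslagSolitarNormalForm.

(** * Faithfulness of actions of BS(1,2) *)

Definition bs_gens (alpha beta : R -> R) (g : bsgen) : R -> R :=
  match g with Alpha => alpha | Beta => beta end.

Section BaumslagSolitarFaithful.

Variables al alinv be beinv : R -> R.
Hypothesis Hal : is_homeo_pair al alinv.
Hypothesis Hbe : is_homeo_pair be beinv.
Hypothesis Hal_incr : strict_increasing al.
Hypothesis Hbe_incr : strict_increasing be.
Hypothesis Hrel : forall y, al (be (alinv y)) = be (be y).
Hypothesis Hal_nontrivial : exists z, al z <> z.
Hypothesis Hbe_nontrivial : exists z, be z <> z.

Local Notation act := (weval (bs_gens al be) (bs_gens alinv beinv)).

Lemma bs_act_peq w1 w2 : bs_eq w1 w2 -> forall z, act w1 z = act w2 z.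
Proof.
  pose proof Hal as (_ & _ & Hal_l & Hal_r). pose proof Hbe as (_ & _ & Hbe_l & Hbe_r).
  apply weval_peq; [intros [|]; auto | intros [|]; auto |].
  intros l r Hlr z. injection Hlr as -> ->. apply Hrel.
Qed.

Lemma bs_act_zpow_add g m n z : act (zpow g m) (act (zpow g n) z) = act (zpow g (m + n)) z.
Proof. rewrite <- weval_app. apply bs_act_peq, zpow_add. Qed.

Lemma bs_act_zpow_trivial g m : (forall z, act (zpow g m) z = z) -> m = 0%Z.
Proof. apply weval_zpow_trivial; destruct g; assumption. Qed.

(* A power of beta that acts as a power of alpha commutes with alpha,
   so the relation makes it act as its own square. *)
Lemma bs_act_beta_power_alpha_power m k :
  (forall y, act (zpow Beta m) y = act (zpow Alpha k) y) -> m = 0%Z.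
Proof.
  pose proof Hal as (_ & _ & Hal_l & _).
  intro Hmk. apply (bs_act_zpow_trivial Beta).
  assert (Hcomm : forall y, al (act (zpow Beta m) y) = act (zpow Beta m) (al y)).
  { intro y. rewrite !Hmk. change (al ?x) with (act (zpow Alpha 1) x).
    rewrite !bs_act_zpow_add, Z.add_comm. reflexivity. }
  assert (Hsq : forall y, act (zpow Beta (2 * m)) y = act (zpow Beta m) y).
  { intro y. rewrite <- (Hal_l y), <- Hcomm.
    pose proof (bs_act_peq _ _ (bs_alpha_zpow m) (alinv y)) as E.
    rewrite weval_app in E. cbn [weval bs_gens] in E. exact (eq_sym E). }
  intro y. transitivity (act (zpow Beta (- m)) (act (zpow Beta (2 * m)) y)).
  - rewrite bs_act_zpow_add. replace (- m + 2 * m)%Z with m by lia. reflexivity.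
  - rewrite Hsq, bs_act_zpow_add, Z.add_opp_diag_l. reflexivity.
Qed.

Lemma bs_act_normal_form_trivial i m j :
  (forall z, act (bs_normal_form i m j) z = z) -> m = 0%Z /\ i = j.
Proof.
  intro Htriv.
  assert (Hmij : forall y, act (zpow Beta m) y = act (zpow Alpha (Z.of_nat i - Z.of_nat j)) y).
  { intro y. specialize (Htriv (act (zpow Alpha (- Z.of_nat j)) y)).
    unfold bs_normal_form in Htriv. rewrite <- zpow_of_nat, <- zpow_opp_of_nat in Htriv.
    rewrite !weval_app in Htriv.
    rewrite bs_act_zpow_add, Z.add_opp_diag_r in Htriv.
    change (act (zpow Alpha 0) y) with y in Htriv.
    transitivity
      (act (zpow Alpha (Z.of_nat i)) (act (zpow Alpha (- Z.of_nat i)) (act (zpow Beta m) y))).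
    - rewrite bs_act_zpow_add, Z.add_opp_diag_r. reflexivity.
    - rewrite Htriv, bs_act_zpow_add. reflexivity. }
  assert (Hm : m = 0%Z) by exact (bs_act_beta_power_alpha_power _ _ Hmij).
  split; [exact Hm |]. subst m.
  enough (Z.of_nat i - Z.of_nat j = 0)%Z by lia.
  apply (bs_act_zpow_trivial Alpha). intro z. rewrite <- Hmij. reflexivity.
Qed.

Lemma bs_act_faithful_trivial w : (forall z, act w z = z) -> bs_eq w [].
Proof.
  intro Htriv. destruct (bs_normal_form_exists w) as (i & m & j & Hw).
  destruct (bs_act_normal_form_trivial i m j) as [-> <-].
  { intro z. rewrite <- (bs_act_peq _ _ Hw). apply Htriv. }
  eapply peq_trans; [exact Hw |]. unfold bs_normal_form.
  rewrite <- zpow_of_nat, <- zpow_opp_of_nat. simpl.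
  eapply peq_trans; [apply zpow_add | rewrite Z.add_opp_diag_l; apply peq_refl].
Qed.

Lemma bs_act_faithful w1 w2 : (forall z, act w1 z = act w2 z) -> bs_eq w1 w2.
Proof.
  intro H. apply peq_of_mul_winv, bs_act_faithful_trivial. intro z.
  rewrite weval_app, H, <- weval_app.
  apply (bs_act_peq _ _ (peq_mul_winv bs_rel w2)).
Qed.

End BaumslagSolitarFaithful.

Lemma higman_generators_nontrivial f finv :
  increasing_higman_action f finv -> (exists w x, weval f finv w x <> x) ->
  forall k, exists z, f k z <> z.
Proof.
  intros Hf [w [x Hwx]] k. apply NNPP. intro Hk.
  assert (H0 : forall z, f k z = z) by (intro z; apply NNPP; intro Hz; apply Hk; eauto).
  pose proof (higman_trivial_next f finv Hf _ H0) as H1.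
  pose proof (higman_trivial_next f finv Hf _ H1) as H2.
  pose proof (higman_trivial_next f finv Hf _ H2) as H3.
  apply Hwx, weval_fixed; [intro g; apply (higman_homeo _ _ Hf g) |].
  intro i. destruct k, i; simpl in *; auto.
Qed.

Lemma weval_bs_subst_letters (f finv : gen4 -> R -> R) j n w x :
  weval f finv (bs_subst [(j, false)] [(n, false)] w) x =
  weval (bs_gens (f j) (f n)) (bs_gens (finv j) (finv n)) w x.
Proof. induction w as [|[[|] [|]] w IH]; simpl; rewrite ?IH; reflexivity. Qed.

Lemma bs_subst_peq u v :
  peq higman_rel (u ++ v ++ winv u) (v ++ v) ->
  forall w1 w2, bs_eq w1 w2 -> peq higman_rel (bs_subst u v w1) (bs_subst u v w2).
Proof.
  intros Huv w1 w2 H. unfold bs_subst. induction H.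
  - apply peq_refl.
  - apply peq_sym; assumption.
  - eapply peq_trans; eassumption.
  - rewrite !flat_map_app. apply peq_app_l. simpl. rewrite app_assoc.
    rewrite <- (app_nil_l (flat_map _ v0)) at 2. apply peq_app_r.
    destruct g, b; simpl; apply peq_mul_winv || apply peq_winv_mul.
  - injection H as -> ->. rewrite !flat_map_app. apply peq_app_l, peq_app_r.
    simpl. rewrite !app_nil_r. exact Huv.
Qed.

Lemma higman_pair_faithful f finv j :
  increasing_higman_action f finv -> (forall k, exists z, f k z <> z) ->
  forall w1 w2,
    (forall x, weval f finv (bs_subst [(j, false)] [(next4 j, false)] w1) x =
               weval f finv (bs_subst [(j, false)] [(next4 j, false)] w2) x) ->
    bs_eq w1 w2.
Proof.
  intros [Hh Hinc Hconj] Hgen w1 w2 H.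
  apply (bs_act_faithful (f j) (finv j) (f (next4 j)) (finv (next4 j))); auto.
  - intro y. pose proof (Hh j) as (_ & _ & Hl & _). rewrite Hconj, Hl. reflexivity.
  - intro x. rewrite <- !weval_bs_subst_letters. apply H.
Qed.

Lemma weval_interval {G} (f finv : G -> R -> R) a b :
  (forall g x, a <= x <= b -> a <= f g x <= b /\ a <= finv g x <= b) ->
  forall w x, a <= x <= b -> a <= weval f finv w x <= b.
Proof.
  intros Hgen w x Hx. induction w as [|[g []] w IH]; simpl; [exact Hx | apply Hgen, IH ..].
Qed.

Lemma homeo_fixing_ends_interval g ginv a b :
  is_homeo_pair g ginv -> strict_increasing g -> g a = a -> g b = b ->
  forall x, a <= x <= b -> a <= g x <= b /\ a <= ginv x <= b.
Proof.
  intros Hh Hg Ha Hb x [Hax Hxb].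
  assert (Hgi : strict_increasing ginv)
    by (apply (strict_increasing_inverse g); [exact Hg | apply Hh]).
  pose proof (homeo_fixed_inverse g ginv a Hh Ha). pose proof (homeo_fixed_inverse g ginv b Hh Hb).
  pose proof (strict_increasing_le g Hg a x Hax). pose proof (strict_increasing_le g Hg x b Hxb).
  pose proof (strict_increasing_le ginv Hgi a x Hax).
  pose proof (strict_increasing_le ginv Hgi x b Hxb).
  lra.
Qed.

Lemma not_semiconj_to_std_of_beta_fixed a b act p :
  a < p < b -> act [(Beta, false)] p = p -> ~ semiconj_to_std a b act.
Proof.
  intros Hp Hfix (h & _ & _ & Hequiv).
  specialize (Hequiv [(Beta, false)] p Hp). rewrite Hfix in Hequiv. simpl in Hequiv. lra.
Qed.

Theorem lemma5p2
  (f finv : gen4 -> R -> R)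
  (Hhomeo : forall i, is_homeo_pair (f i) (finv i))
  (Hhom : forall l r, higman_rel (l, r) ->
            forall x, weval f finv l x = weval f finv r x)
  (Hnontriv : exists (w : word gen4) (x : R), weval f finv w x <> x)
  (Hnofix : ~ (exists x : R, forall w : word gen4, weval f finv w x = x)) :
  exists u v : word gen4,
    (* alpha |-> u, beta |-> v defines a homomorphism phi : BS(1,2) -> H *)
    peq higman_rel (u ++ v ++ winv u) (v ++ v) /\
    (* phi is injective, so B := phi(BS(1,2)) is isomorphic to BS(1,2) *)
    (forall w1 w2 : word bsgen,
        peq higman_rel (bs_subst u v w1) (bs_subst u v w2) -> peq bs_rel w1 w2) /\
    (* psi restricted to B is injective *)
    (forall w1 w2 : word bsgen,
        (forall x, weval f finv (bs_subst u v w1) x = weval f finv (bs_subst u v w2) x) ->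
        peq higman_rel (bs_subst u v w1) (bs_subst u v w2)) /\
    (* psi(B) preserves a compact interval I = [a,b] and its action on I
       is not semi-conjugate to the standard affine action *)
    exists a b : R, a < b /\
      (forall (w : word bsgen) x, a <= x <= b ->
          a <= weval f finv (bs_subst u v w) x <= b) /\
      ~ semiconj_to_std a b (fun w => weval f finv (bs_subst u v w)).
Proof.
  pose proof (increasing_higman_action_of_hom f finv Hhomeo Hhom) as Hf.
  pose proof (higman_generators_nontrivial f finv Hf Hnontriv) as Hgen.
  destruct (higman_nested_fixed_points f finv Hf)
    as (j & a & p & b & Hapb & Hja & Hjb & Hna & Hnb & Hnp).
  { intros [x Hx]. apply Hnofix. exists x. apply weval_fixed; [intro i; apply Hhomeo | exact Hx]. }
  set (u := [(j, false)]). set (v := [(next4 j, false)]).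
  assert (Huv : peq higman_rel (u ++ v ++ winv u) (v ++ v))
    by exact (peq_rel higman_rel [] [] (u ++ v ++ winv u) (v ++ v) (ex_intro _ j eq_refl)).
  pose proof (higman_pair_faithful f finv j Hf Hgen) as Hfaithful.
  exists u, v. split; [exact Huv | split; [| split]].
  - intros w1 w2 H. apply Hfaithful, (weval_peq higman_rel);
      [apply Hhomeo | apply Hhomeo | exact Hhom | exact H].
  - intros w1 w2 H. apply (bs_subst_peq u v Huv), Hfaithful, H.
  - exists a, b. split; [lra | split].
    + intros w x Hx. unfold u, v. rewrite weval_bs_subst_letters.
      apply weval_interval; [| exact Hx].
      intros [|]; apply homeo_fixing_ends_interval; simpl; auto; apply Hf.
    + apply (not_semiconj_to_std_of_beta_fixed a b _ p Hapb). exact Hnp.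
Qed.
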